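(* Let $0<q<1/2$, $p=1-q$, $s=4pq$, and let $I_x(a,b)=\frac{\Gamma(a+b)}{\Gamma(a)\Gamma(b)}\int_0^xt^{a-1}(1-t)^{b-1}\,dt$. For every real $z>1$, $$\sqrt{\frac{z}{z+\frac12}}\cdot\frac{s^z}{\sqrt{\pi z}}\le I_s(z,1/2)\le\frac{1}{\sqrt{1-s}}\cdot\frac{s^z}{\sqrt{\pi z}}.$$
   Context: For integers $z\ge1$, $I_s(z,1/2)$ equals the probability $P(z)=1-\sum_{k=0}^{z-1}(p^zq^k-q^zp^k)\binom{k+z-1}{k}$ of success of a double-spend attack after $z$ confirmations. *)

From Stdlib Require Import Reals.
From Coquelicot Require Import Coquelicot.
Open Scope R_scope.

Definition Gamma (a : R) : R :=
  RInt_gen (fun t => Rpower t (a - 1) * exp (- t))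
           (at_right 0) (Rbar_locally p_infty).

(* Used here only with a = z > 1, b = 1/2 and 0 < x < 1, where the integrand
   is continuous on (0, x] and the integral is an ordinary Riemann integral. *)
Definition inc_beta (x a b : R) : R :=
  Gamma (a + b) / (Gamma a * Gamma b) *
  RInt (fun t => Rpower t (a - 1) * Rpower (1 - t) (b - 1)) 0 x.

(* Write [B s = int_0^s t^(z-1) (1-t)^(-1/2) dt], so that
   [I_s(z,1/2) = Gamma(z+1/2) / (Gamma z * Gamma(1/2)) * B s].  Since
   [1 <= (1-t)^(-1/2) <= (1-s)^(-1/2)] on [[0,s]], [B s] lies between [s^z/z] and
   [(1-s)^(-1/2) s^z/z].  Gautschi's inequality
   [z / sqrt(z+1/2) <= Gamma(z+1/2) / Gamma z <= sqrt z] follows from the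
   log-convexity of Gamma (AM-GM under the integral) and [Gamma(x+1) = x Gamma x].
   Finally [Gamma(1/2) = sqrt PI]: at integers [k], Gautschi's inequality and the
   Wallis integrals [int_0^(PI/2) sin^n] put [Gamma(1/2)^2] and [PI] in the same
   interval, of relative width [1/(2k)]. *)

From Stdlib Require Import Reals Lra Lia Classical.
From Coquelicot Require Import Coquelicot.
Open Scope R_scope.

(** * Improper integrals over (0, +oo) *)

Lemma at_right_0_interval d : 0 < d -> at_right 0 (fun a => 0 < a < d).
Proof.
  intros Hd. exists (mkposreal d Hd). intros a Ha Hpos.
  change (Rabs (a - 0) < d) in Ha. rewrite Rminus_0_r in Ha.
  apply Rabs_def2 in Ha. lra.
Qed.

Lemma filter_prod_pos_le :
  filter_prod (at_right 0) (Rbar_locally p_infty) (fun ab => 0 < fst ab <= snd ab).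
Proof.
  apply Filter_prod with (fun a => 0 < a < 1) (fun b => 1 < b).
  - exact (at_right_0_interval 1 Rlt_0_1).
  - exists 1. tauto.
  - intros a b Ha Hb. simpl. lra.
Qed.

Lemma filter_prod_pos (P : R -> Prop) : (forall t, 0 < t -> P t) ->
  filter_prod (at_right 0) (Rbar_locally p_infty)
    (fun ab => forall t, Rmin (fst ab) (snd ab) <= t <= Rmax (fst ab) (snd ab) -> P t).
Proof.
  intros HP. apply (filter_imp (fun ab => 0 < fst ab <= snd ab)); [|exact filter_prod_pos_le].
  intros [a b] Hab t Ht. simpl in *. rewrite Rmin_left in Ht by lra. apply HP. lra.
Qed.

Lemma ex_RInt_continuous_pos (f : R -> R) a b :
  (forall t, 0 < t -> continuous f t) -> 0 < a -> a <= b -> ex_RInt f a b.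
Proof.
  intros Hf Ha Hab. apply (@ex_RInt_continuous R_CompleteNormedModule).
  intros t Ht. apply Hf. rewrite Rmin_left in Ht; lra.
Qed.

Lemma is_RInt_gen_le_pos (f g : R -> R) lf lg :
  (forall t, 0 < t -> f t <= g t) ->
  is_RInt_gen f (at_right 0) (Rbar_locally p_infty) lf ->
  is_RInt_gen g (at_right 0) (Rbar_locally p_infty) lg -> lf <= lg.
Proof.
  intros Hfg Hf Hg. apply Rnot_lt_le. intros Hlt.
  assert (He : 0 < (lf - lg) / 2) by lra.
  set (e := mkposreal _ He).
  pose proof (Hf _ (locally_ball lf e)) as Nf.
  pose proof (Hg _ (locally_ball lg e)) as Ng.
  unfold filtermapi in Nf, Ng.
  destruct (filter_ex _ (filter_and _ _ filter_prod_pos_le (filter_and _ _ Nf Ng)))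
    as [[a b] [Hab [[yf [If Bf]] [yg [Ig Bg]]]]].
  simpl in Hab, If, Ig.
  assert (Hy : yf <= yg).
  { apply (is_RInt_le f g a b); try tauto. intros t Ht. apply Hfg. lra. }
  change (Rabs (yf - lf) < e) in Bf. change (Rabs (yg - lg) < e) in Bg.
  apply Rabs_def2 in Bf. apply Rabs_def2 in Bg. simpl in Bf, Bg. lra.
Qed.

Lemma RInt_subinterval_le (f : R -> R) a a' b' b :
  (forall t, 0 < t -> 0 <= f t) -> (forall t, 0 < t -> continuous f t) ->
  0 < a -> a <= a' -> a' <= b' -> b' <= b -> RInt f a' b' <= RInt f a b.
Proof.
  intros Hpos Hf Ha Ha' Hab' Hb.
  rewrite <- (RInt_Chasles f a a' b) by (apply ex_RInt_continuous_pos; auto; lra).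
  rewrite <- (RInt_Chasles f a' b' b) by (apply ex_RInt_continuous_pos; auto; lra).
  assert (0 <= RInt f a a').
  { apply RInt_ge_0; auto. apply ex_RInt_continuous_pos; auto. intros; apply Hpos; lra. }
  assert (0 <= RInt f b' b).
  { apply RInt_ge_0; auto. apply ex_RInt_continuous_pos; auto; lra. intros; apply Hpos; lra. }
  unfold plus; simpl. lra.
Qed.

Lemma is_RInt_gen_sup (f : R -> R) M :
  (forall t, 0 < t -> 0 <= f t) -> (forall t, 0 < t -> continuous f t) ->
  (forall a b, 0 < a <= b -> RInt f a b <= M) ->
  exists l, is_RInt_gen f (at_right 0) (Rbar_locally p_infty) l /\
            forall a b, 0 < a <= b -> RInt f a b <= l.
Proof.
  intros Hpos Hf HM.
  set (E := fun y => exists a b, 0 < a <= b /\ y = RInt f a b).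
  destruct (completeness E) as [l [Hub Hlub]].
  { exists M. intros y [a [b [Hab ->]]]. auto. }
  { exists (RInt f 1 1), 1, 1. split; [lra | reflexivity]. }
  assert (Hle : forall a b, 0 < a <= b -> RInt f a b <= l).
  { intros a b Hab. apply Hub. exists a, b. auto. }
  exists l. split; [|exact Hle].
  intros P [eps HP].
  assert (Happrox : exists a' b', 0 < a' <= b' /\ l - eps < RInt f a' b').
  { apply not_all_not_ex. intros Hn.
    assert (l <= l - eps); [|destruct eps; simpl in *; lra].
    apply Hlub. intros y [a [b [Hab ->]]]. apply Rnot_lt_le.
    intros Hy. apply (Hn a). exists b. auto. }
  destruct Happrox as [a' [b' [Hab' Hl]]].
  apply Filter_prod with (fun a => 0 < a < a') (fun b => b' < b).
  - apply at_right_0_interval. lra.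
  - exists b'. auto.
  - intros a b Ha Hb. exists (RInt f a b). split.
    + apply (@RInt_correct R_CompleteNormedModule), ex_RInt_continuous_pos; auto; lra.
    + apply HP. change (Rabs (RInt f a b - l) < eps).
      pose proof (RInt_subinterval_le f a a' b' b Hpos Hf ltac:(lra) ltac:(lra) ltac:(lra) ltac:(lra)).
      pose proof (Hle a b ltac:(lra)).
      apply Rabs_def1; lra.
Qed.

Lemma is_RInt_gen_derive_pos (F f : R -> R) la lb :
  (forall t, 0 < t -> is_derive F t (f t)) -> (forall t, 0 < t -> continuous f t) ->
  filterlim F (at_right 0) (locally la) ->
  filterlim F (Rbar_locally p_infty) (locally lb) ->
  is_RInt_gen f (at_right 0) (Rbar_locally p_infty) (lb - la).
Proof.
  intros HF Hf Hla Hlb.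
  assert (HD : forall t, 0 < t -> Derive F t = f t).
  { intros t Ht. apply is_derive_unique, HF, Ht. }
  apply (is_RInt_gen_ext (Derive F)).
  { refine (filter_imp _ _ _ (filter_prod_pos _ HD)). intros ab H t Ht. apply H. lra. }
  apply is_RInt_gen_Derive; auto.
  - apply filter_prod_pos. intros t Ht. exists (f t). apply HF, Ht.
  - apply filter_prod_pos. intros t Ht. apply (continuous_ext_loc _ f); auto.
    apply (locally_interval _ t 0 p_infty); simpl; auto.
    intros y Hy _. symmetry. apply HD, Hy.
Qed.

Lemma filterlim_at_right_0_le_Rpower (f : R -> R) x :
  0 < x -> (forall t, 0 < t -> Rabs (f t) <= Rpower t x) ->
  filterlim f (at_right 0) (locally 0).
Proof.
  intros Hx Hf. apply filterlim_locally. intros eps.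
  apply (filter_imp (fun t => 0 < t < Rpower eps (/ x))).
  - intros t Ht. change (Rabs (f t - 0) < eps). rewrite Rminus_0_r.
    eapply Rle_lt_trans; [apply Hf; lra|].
    replace (pos eps) with (Rpower (Rpower eps (/ x)) x)
      by (rewrite Rpower_mult, Rinv_l, Rpower_1; destruct eps; simpl; lra).
    apply Rlt_Rpower_l; lra.
  - apply at_right_0_interval. apply exp_pos.
Qed.

Lemma filterlim_p_infty_le_inv (f : R -> R) C :
  (forall t, 0 < t -> Rabs (f t) <= C / t) ->
  filterlim f (Rbar_locally p_infty) (locally 0).
Proof.
  intros Hf. apply filterlim_locally. intros eps.
  exists (Rabs C / eps). intros t Ht.
  assert (HC := Rle_abs C). assert (HCe : 0 <= Rabs C / eps).
  { apply Rdiv_le_0_compat; [apply Rabs_pos | apply cond_pos]. }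
  change (Rabs (f t - 0) < eps). rewrite Rminus_0_r.
  eapply Rle_lt_trans; [apply Hf; lra|].
  apply Rlt_div_l; [lra|].
  apply Rlt_div_l in Ht; [|apply cond_pos]. lra.
Qed.

Lemma ln_lt_id y : 0 < y -> ln y < y.
Proof.
  intros Hy. pose proof (exp_ineq1_le (ln y)) as H. rewrite exp_ln in H; lra.
Qed.

Lemma Rpower_mul_exp_opp_le c t :
  0 < c -> 0 < t -> Rpower t c * exp (- t) <= Rpower c c.
Proof.
  intros Hc Ht. unfold Rpower. rewrite <- exp_plus. apply Rlt_le, exp_increasing.
  assert (H : ln (t / c) < t / c) by (apply ln_lt_id, Rdiv_lt_0_compat; auto).
  rewrite ln_div in H by auto.
  apply (Rmult_lt_compat_l c) in H; auto.
  replace (c * (t / c)) with t in H by (field; lra). lra.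
Qed.

Lemma is_RInt_gen_lin_comb {Fa Fb : (R -> Prop) -> Prop} {FFa : Filter Fa} {FFb : Filter Fb}
  (f g : R -> R) lf lg al be :
  is_RInt_gen f Fa Fb lf -> is_RInt_gen g Fa Fb lg ->
  is_RInt_gen (fun t => al * f t + be * g t) Fa Fb (al * lf + be * lg).
Proof.
  intros Hf Hg.
  apply (is_RInt_gen_plus (V := R_NormedModule) (fun t => al * f t) (fun t => be * g t));
    apply (is_RInt_gen_scal (V := R_NormedModule)); assumption.
Qed.

(** * The Gamma function *)

Definition Gamma_integrand (x t : R) : R := Rpower t (x - 1) * exp (- t).

Lemma Gamma_integrand_pos x t : 0 < Gamma_integrand x t.
Proof. apply Rmult_lt_0_compat; apply exp_pos. Qed.

Lemma Gamma_integrand_continuous x t : 0 < t -> continuous (Gamma_integrand x) t.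
Proof.
  intros Ht. apply (@ex_derive_continuous R_AbsRing R_NormedModule).
  unfold Gamma_integrand, Rpower. auto_derive. exact Ht.
Qed.

Lemma Rpower_sub_1 t x : 0 < t -> Rpower t (x - 1) = Rpower t x / t.
Proof.
  intros Ht. unfold Rpower. replace ((x - 1) * ln t) with (x * ln t + - ln t) by ring.
  rewrite exp_plus, exp_Ropp, exp_ln by exact Ht. reflexivity.
Qed.

Lemma is_RInt_Gamma_majorant x a b : 0 < a <= b ->
  is_RInt (fun t => x * Rpower t (x - 1) / (1 + Rpower t x) ^ 2) a b
    (/ (1 + Rpower a x) - / (1 + Rpower b x)).
Proof.
  intros Hab.
  assert (Hpow := fun t => exp_pos (x * ln t)).
  set (F := fun t => - / (1 + Rpower t x)).
  replace (/ (1 + Rpower a x) - / (1 + Rpower b x)) with (minus (F b) (F a))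
    by (unfold minus, plus, opp, F; simpl; ring).
  apply (@is_RInt_derive R_CompleteNormedModule); intros t Ht;
    rewrite Rmin_left, Rmax_right in Ht by lra.
  - rewrite (Rpower_sub_1 t x) by lra. unfold F, Rpower. auto_derive.
    + specialize (Hpow t). repeat split; lra.
    + specialize (Hpow t). field. lra.
  - apply (@ex_derive_continuous R_AbsRing R_NormedModule). unfold Rpower. auto_derive.
    specialize (Hpow t). repeat split; try lra. apply Rgt_not_eq. nra.
Qed.

(* The majorant integrates to at most 1 over any [[a, b]]; the constant comes
   from [t ^ (2x) * exp (- t) <= (2x) ^ (2x)]. *)
Lemma Gamma_integrand_le_majorant x t : 0 < x -> 0 < t ->
  Gamma_integrand x t
    <= 2 * (1 + Rpower (2 * x) (2 * x)) / x * (x * Rpower t (x - 1) / (1 + Rpower t x) ^ 2).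
Proof.
  intros Hx Ht. unfold Gamma_integrand.
  set (B := Rpower (2 * x) (2 * x)). set (v := Rpower t x). set (u := Rpower t (x - 1)).
  set (E := exp (- t)).
  assert (Hu : 0 < u) by apply exp_pos. assert (Hv : 0 < v) by apply exp_pos.
  assert (HE : 0 < E) by apply exp_pos.
  assert (HE1 : E <= 1) by (unfold E; rewrite <- exp_0; apply Rlt_le, exp_increasing; lra).
  assert (HB : v * v * E <= B).
  { unfold v, B, E. rewrite <- Rpower_plus. replace (x + x) with (2 * x) by ring.
    apply Rpower_mul_exp_opp_le; lra. }
  replace (2 * (1 + B) / x * (x * u / (1 + v) ^ 2)) with (u * (2 * (1 + B) / (1 + v) ^ 2))
    by (field; lra).
  assert (Hsq : 0 <= (v - 1) ^ 2) by apply pow2_ge_0.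
  assert (Hbound : E * (1 + v) ^ 2 <= 2 * (1 + B)) by nra.
  apply Rmult_le_compat_l; [lra|].
  apply Rle_div_r; [nra | exact Hbound].
Qed.

Lemma RInt_Gamma_integrand_bounded x : 0 < x ->
  exists M, forall a b, 0 < a <= b -> RInt (Gamma_integrand x) a b <= M.
Proof.
  intros Hx. set (K := 2 * (1 + Rpower (2 * x) (2 * x)) / x).
  assert (HK : 0 < K).
  { apply Rdiv_lt_0_compat; [|exact Hx]. pose proof (exp_pos (2 * x * ln (2 * x))).
    unfold Rpower. lra. }
  exists K. intros a b Hab.
  assert (Hmaj := is_RInt_scal _ _ _ K _ (is_RInt_Gamma_majorant x a b Hab)).
  eapply Rle_trans.
  - apply (is_RInt_le _ _ a b _ _ (proj2 Hab)
      (@RInt_correct R_CompleteNormedModule _ a b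
        (ex_RInt_continuous_pos _ a b (Gamma_integrand_continuous x) (proj1 Hab) (proj2 Hab))) Hmaj).
    intros t Ht. apply Gamma_integrand_le_majorant; lra.
  - pose proof (exp_pos (x * ln a)). pose proof (exp_pos (x * ln b)).
    change (K * (/ (1 + Rpower a x) - / (1 + Rpower b x)) <= K).
    assert (0 < / (1 + Rpower b x)) by (apply Rinv_0_lt_compat; unfold Rpower; lra).
    assert (/ (1 + Rpower a x) <= 1).
    { rewrite <- Rinv_1. apply Rinv_le_contravar; unfold Rpower; lra. }
    nra.
Qed.

Lemma Gamma_correct x : 0 < x ->
  is_RInt_gen (Gamma_integrand x) (at_right 0) (Rbar_locally p_infty) (Gamma x) /\
  forall a b, 0 < a <= b -> RInt (Gamma_integrand x) a b <= Gamma x.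
Proof.
  intros Hx. destruct (RInt_Gamma_integrand_bounded x Hx) as [M HM].
  destruct (is_RInt_gen_sup (Gamma_integrand x) M) as [l [Hl Hle]]; auto.
  - intros t _. apply Rlt_le, Gamma_integrand_pos.
  - apply Gamma_integrand_continuous.
  - replace (Gamma x) with l; [auto|].
    symmetry. exact (is_RInt_gen_unique _ _ Hl).
Qed.

Lemma Gamma_pos x : 0 < x -> 0 < Gamma x.
Proof.
  intros Hx. apply Rlt_le_trans with (RInt (Gamma_integrand x) 1 2).
  - apply RInt_gt_0; [lra | intros; apply Gamma_integrand_pos |].
    intros t Ht. apply Gamma_integrand_continuous. lra.
  - apply (Gamma_correct x Hx). lra.
Qed.

Lemma Gamma_1 : Gamma 1 = 1.
Proof.
  assert (H : is_RInt_gen (Gamma_integrand 1) (at_right 0) (Rbar_locally p_infty)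
                (0 - - exp (- 0))).
  { apply (is_RInt_gen_derive_pos (fun t => - exp (- t))).
    - intros t Ht. unfold Gamma_integrand. rewrite Rminus_diag, Rpower_O by exact Ht.
      auto_derive; [exact I | ring].
    - apply Gamma_integrand_continuous.
    - apply (filterlim_filter_le_1 _ (filter_le_within _)).
      apply (@ex_derive_continuous R_AbsRing R_NormedModule (fun t => - exp (- t)) 0).
      auto_derive. exact I.
    - apply (filterlim_p_infty_le_inv _ 1). intros t Ht.
      pose proof (Rpower_mul_exp_opp_le 1 t Rlt_0_1 Ht) as H.
      rewrite !Rpower_1 in H by lra. pose proof (exp_pos (- t)).
      rewrite Rabs_Ropp, Rabs_pos_eq by lra. apply Rle_div_r; lra. }
  change (RInt_gen (Gamma_integrand 1) (at_right 0) (Rbar_locally p_infty) = 1).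
  rewrite (is_RInt_gen_unique _ _ H), Ropp_0, exp_0. lra.
Qed.

Lemma Gamma_succ x : 0 < x -> Gamma (x + 1) = x * Gamma x.
Proof.
  intros Hx. set (F := fun t => - (Rpower t x * exp (- t))).
  assert (HF : is_RInt_gen (fun t => Gamma_integrand (x + 1) t - x * Gamma_integrand x t)
                 (at_right 0) (Rbar_locally p_infty) (0 - 0)).
  { apply (is_RInt_gen_derive_pos F).
    - intros t Ht. unfold F, Gamma_integrand.
      replace (x + 1 - 1) with x by ring. rewrite (Rpower_sub_1 t x) by exact Ht.
      unfold Rpower. auto_derive; [exact Ht | field; lra].
    - intros t Ht. apply (continuous_minus (V := R_NormedModule)).
      + apply Gamma_integrand_continuous, Ht.
      + apply (continuous_scal_r (V := R_NormedModule) x). apply Gamma_integrand_continuous, Ht.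
    - apply (filterlim_at_right_0_le_Rpower _ x Hx). intros t Ht. unfold F.
      pose proof (exp_pos (x * ln t)). pose proof (exp_pos (- t)).
      assert (exp (- t) < 1) by (rewrite <- exp_0; apply exp_increasing; lra).
      rewrite Rabs_Ropp, Rabs_pos_eq; unfold Rpower; nra.
    - apply (filterlim_p_infty_le_inv _ (Rpower (x + 1) (x + 1))). intros t Ht.
      pose proof (Rpower_mul_exp_opp_le (x + 1) t ltac:(lra) Ht) as H.
      rewrite (Rpower_plus x 1 t), (Rpower_1 t) in H by exact Ht. unfold F.
      pose proof (exp_pos (x * ln t)). pose proof (exp_pos (- t)).
      rewrite Rabs_Ropp, Rabs_pos_eq by (unfold Rpower; nra). apply (Rle_div_r _ _ t Ht). nra. }
  pose proof (is_RInt_gen_lin_comb _ _ _ _ 1 x HF (proj1 (Gamma_correct x Hx))) as H.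
  change (RInt_gen (Gamma_integrand (x + 1)) (at_right 0) (Rbar_locally p_infty) = x * Gamma x).
  apply is_RInt_gen_unique. replace (x * Gamma x) with (1 * (0 - 0) + x * Gamma x) by ring.
  assert (E : forall t, 1 * (Gamma_integrand (x + 1) t - x * Gamma_integrand x t)
                         + x * Gamma_integrand x t = Gamma_integrand (x + 1) t)
    by (intros; ring).
  exact (is_RInt_gen_ext _ _ _ (filter_forall _ (fun _ t _ => E t)) H).
Qed.

Lemma le_weighted_mean_of_sqr_eq u v w l : 0 <= u -> 0 <= v -> 0 <= w -> 0 < l ->
  w * w = u * v -> w <= l / 2 * u + / (2 * l) * v.
Proof.
  intros Hu Hv Hw Hl Hwuv.
  replace (l / 2 * u + / (2 * l) * v) with ((l * l * u + v) / (2 * l)) by (field; lra).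
  apply Rle_div_r; [lra|].
  assert (Hsq : 0 <= (l * l * u - v) ^ 2) by apply pow2_ge_0.
  apply Rsqr_incr_0_var; [|nra].
  unfold Rsqr. replace (w * (2 * l) * (w * (2 * l))) with (4 * (l * l) * (u * v))
    by (rewrite <- Hwuv; ring).
  nra.
Qed.

(* Log-convexity: AM-GM [t^(x-1/2) <= l/2 t^(x-1) + 1/(2l) t^x] under the integral. *)
Lemma Gamma_add_half_le_mean x l : 0 < x -> 0 < l ->
  Gamma (x + 1 / 2) <= l / 2 * Gamma x + / (2 * l) * Gamma (x + 1).
Proof.
  intros Hx Hl.
  apply (is_RInt_gen_le_pos (Gamma_integrand (x + 1 / 2))
           (fun t => l / 2 * Gamma_integrand x t + / (2 * l) * Gamma_integrand (x + 1) t)).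
  - intros t Ht. unfold Gamma_integrand.
    rewrite <- !Rmult_assoc, <- Rmult_plus_distr_r.
    apply Rmult_le_compat_r; [apply Rlt_le, exp_pos|].
    apply le_weighted_mean_of_sqr_eq; try (apply Rlt_le, exp_pos); auto.
    unfold Rpower. rewrite <- !exp_plus. apply f_equal. lra.
  - refine (proj1 (Gamma_correct _ _)). lra.
  - apply is_RInt_gen_lin_comb; refine (proj1 (Gamma_correct _ _)); lra.
Qed.

Lemma Gamma_add_half_le x : 0 < x -> Gamma (x + 1 / 2) <= sqrt x * Gamma x.
Proof.
  intros Hx. pose proof (sqrt_lt_R0 x Hx) as Hs.
  pose proof (Gamma_add_half_le_mean x (sqrt x) Hx Hs) as H.
  rewrite Gamma_succ in H by exact Hx.
  replace (x * Gamma x) with (sqrt x * sqrt x * Gamma x) in H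
    by (rewrite sqrt_sqrt by lra; reflexivity).
  replace (sqrt x / 2 * Gamma x + / (2 * sqrt x) * (sqrt x * sqrt x * Gamma x))
    with (sqrt x * Gamma x) in H by (field; lra).
  exact H.
Qed.

Lemma Gamma_add_half_ratio_bounds x : 0 < x ->
  x / sqrt (x + 1 / 2) <= Gamma (x + 1 / 2) / Gamma x <= sqrt x.
Proof.
  intros Hx. pose proof (Gamma_pos x Hx) as HG.
  pose proof (sqrt_lt_R0 (x + 1 / 2) ltac:(lra)) as Hy.
  pose proof (Gamma_add_half_le (x + 1 / 2) ltac:(lra)) as Hlo.
  replace (x + 1 / 2 + 1 / 2) with (x + 1) in Hlo by field.
  rewrite Gamma_succ in Hlo by exact Hx.
  split.
  - apply (Rle_div_r _ _ _ HG).
    replace (x / sqrt (x + 1 / 2) * Gamma x) with (x * Gamma x / sqrt (x + 1 / 2)) by (field; lra).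
    apply (Rle_div_l _ _ _ Hy). lra.
  - apply (Rle_div_l _ _ _ HG), Gamma_add_half_le, Hx.
Qed.

Lemma Gamma_add_half_ratio_sqr_bounds x : 0 < x ->
  x ^ 2 / (x + 1 / 2) <= (Gamma (x + 1 / 2) / Gamma x) ^ 2 <= x.
Proof.
  intros Hx. destruct (Gamma_add_half_ratio_bounds x Hx) as [Hlo Hup].
  assert (H0 : 0 <= x / sqrt (x + 1 / 2)).
  { apply Rlt_le, Rdiv_lt_0_compat; [lra | apply sqrt_lt_R0; lra]. }
  split.
  - replace (x ^ 2 / (x + 1 / 2)) with ((x / sqrt (x + 1 / 2)) ^ 2)
      by (unfold Rdiv; rewrite Rpow_mult_distr, pow_inv, pow2_sqrt by lra; reflexivity).
    apply pow_incr. lra.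
  - apply Rle_trans with (sqrt x ^ 2); [apply pow_incr; lra | rewrite pow2_sqrt; lra].
Qed.

(** * Wallis integrals and Gamma(1/2) *)

Definition wallis (n : nat) : R := RInt (fun t => sin t ^ n) 0 (PI / 2).

(* [wallis_ratio n = binomial (2n) n / 4 ^ n]. *)
Fixpoint wallis_ratio (n : nat) : R :=
  match n with
  | O => 1
  | S m => wallis_ratio m * (2 * INR m + 1) / (2 * INR m + 2)
  end.

Lemma wallis_ratio_pos n : 0 < wallis_ratio n.
Proof.
  induction n as [|n IHn]; simpl; [lra|]. pose proof (pos_INR n).
  apply Rdiv_lt_0_compat; [apply Rmult_lt_0_compat|]; lra.
Qed.

Lemma ex_RInt_sin_pow n a b : ex_RInt (fun t => sin t ^ n) a b.
Proof.
  apply (@ex_RInt_continuous R_CompleteNormedModule). intros t _.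
  apply (@ex_derive_continuous R_AbsRing R_NormedModule). auto_derive. exact I.
Qed.

(* Integration by parts, with [- cos t * sin t ^ (n + 1)] as antiderivative. *)
Lemma wallis_SS n : (INR n + 2) * wallis (S (S n)) = (INR n + 1) * wallis n.
Proof.
  set (f := fun t => (INR n + 2) * sin t ^ S (S n) - (INR n + 1) * sin t ^ n).
  set (F := fun t => - (cos t * sin t ^ S n)).
  assert (HF : is_RInt f 0 (PI / 2) (minus (F (PI / 2)) (F 0))).
  { apply (@is_RInt_derive R_CompleteNormedModule); intros t _.
    - unfold F, f. auto_derive; [exact I|].
      change (match n with 0%nat => 1 | S _ => INR n + 1 end) with (INR (S n)).
      rewrite S_INR. pose proof (sin2_cos2 t) as Hsc. unfold Rsqr in Hsc.
      replace (cos t * (1 * cos t * ((INR n + 1) * sin t ^ n)))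
        with (cos t * cos t * ((INR n + 1) * sin t ^ n)) by ring.
      replace (cos t * cos t) with (1 - sin t * sin t) by lra. simpl. ring.
    - apply (@ex_derive_continuous R_AbsRing R_NormedModule). unfold f. auto_derive. exact I. }
  assert (HW : is_RInt f 0 (PI / 2) ((INR n + 2) * wallis (S (S n)) - (INR n + 1) * wallis n)).
  { apply (is_RInt_minus (V := R_NormedModule));
      apply (is_RInt_scal (V := R_NormedModule));
      apply (@RInt_correct R_CompleteNormedModule), ex_RInt_sin_pow. }
  apply Rminus_diag_uniq.
  rewrite <- (is_RInt_unique _ _ _ _ HW), (is_RInt_unique _ _ _ _ HF).
  unfold minus, plus, opp, F. simpl. rewrite sin_0, cos_PI2. ring.
Qed.

Lemma wallis_0 : wallis 0 = PI / 2.
Proof.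
  unfold wallis. simpl. rewrite RInt_const. unfold scal. simpl. unfold mult. simpl. ring.
Qed.

Lemma wallis_1 : wallis 1 = 1.
Proof.
  unfold wallis. set (F := fun t => - cos t).
  assert (HF : is_RInt (fun t => sin t ^ 1) 0 (PI / 2) (minus (F (PI / 2)) (F 0))).
  { apply (@is_RInt_derive R_CompleteNormedModule); intros t _.
    - unfold F. auto_derive; [exact I | ring].
    - apply (@ex_derive_continuous R_AbsRing R_NormedModule). auto_derive. exact I. }
  rewrite (is_RInt_unique _ _ _ _ HF). unfold minus, plus, opp, F. simpl.
  rewrite cos_0, cos_PI2. ring.
Qed.

Lemma wallis_S_le n : wallis (S n) <= wallis n.
Proof.
  pose proof PI_RGT_0. unfold wallis.
  apply RInt_le; [lra | apply ex_RInt_sin_pow | apply ex_RInt_sin_pow |].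
  intros t Ht. simpl. assert (0 <= sin t) by (apply sin_ge_0; lra).
  pose proof (SIN_bound t). assert (0 <= sin t ^ n) by (apply pow_le; lra). nra.
Qed.

Lemma wallis_even n : wallis (2 * n) = PI / 2 * wallis_ratio n.
Proof.
  induction n as [|n IHn]; [simpl; rewrite wallis_0; ring|].
  replace (2 * S n)%nat with (S (S (2 * n))) by lia.
  pose proof (wallis_SS (2 * n)) as H. rewrite mult_INR, IHn in H. simpl INR in H.
  pose proof (pos_INR n). simpl wallis_ratio.
  apply (Rmult_eq_reg_l (2 * INR n + 2)); [|lra]. replace (1 + 1) with 2 in H by ring.
  rewrite H. field. lra.
Qed.

Lemma wallis_odd n : wallis (2 * n + 1) = 1 / ((2 * INR n + 1) * wallis_ratio n).
Proof.
  induction n as [|n IHn]; [simpl; rewrite wallis_1; field|].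
  replace (2 * S n + 1)%nat with (S (S (2 * n + 1))) by lia.
  pose proof (wallis_SS (2 * n + 1)) as H. rewrite plus_INR, mult_INR in H.
  pose proof (pos_INR n). pose proof (wallis_ratio_pos n).
  rewrite IHn in H. simpl INR in H. simpl wallis_ratio. rewrite S_INR.
  apply (Rmult_eq_reg_l (2 * INR n + 1 + 2)); [|lra].
  replace (1 + 1) with 2 in H by ring. rewrite H. field. lra.
Qed.

Lemma PI_wallis_ratio_sqr_bounds k : (1 <= k)%nat ->
  1 / (INR k + 1 / 2) <= PI * wallis_ratio k ^ 2 <= 1 / INR k.
Proof.
  intros Hk. destruct k as [|m]; [lia|].
  pose proof (wallis_S_le (2 * S m)) as Hodd. pose proof (wallis_S_le (2 * m + 1)) as Heven.
  replace (S (2 * S m)) with (2 * S m + 1)%nat in Hodd by lia.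
  replace (S (2 * m + 1)) with (2 * S m)%nat in Heven by lia.
  rewrite wallis_odd, wallis_even in Hodd, Heven.
  pose proof (wallis_ratio_pos (S m)). pose proof (wallis_ratio_pos m).
  pose proof (pos_INR m). pose proof PI_RGT_0.
  assert (Hrec : (2 * INR m + 1) * wallis_ratio m = 2 * INR (S m) * wallis_ratio (S m))
    by (simpl wallis_ratio; rewrite S_INR; field; lra).
  rewrite S_INR in *. set (w := wallis_ratio (S m)) in *.
  split.
  - apply (Rmult_le_compat_l (2 * w)) in Hodd; [|lra].
    replace (2 * w * (1 / ((2 * (INR m + 1) + 1) * w))) with (1 / (INR m + 1 + 1 / 2))
      in Hodd by (field; lra).
    lra.
  - apply (Rmult_le_compat_l (2 * w)) in Heven; [|lra].
    rewrite Hrec in Heven.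
    replace (2 * w * (1 / (2 * (INR m + 1) * w))) with (1 / (INR m + 1)) in Heven
      by (field; lra).
    lra.
Qed.

Lemma Gamma_nat_add_half n :
  Gamma (INR n + 1 / 2) = Gamma (1 / 2) * wallis_ratio n * Gamma (INR n + 1).
Proof.
  induction n as [|n IHn].
  - simpl. rewrite Rplus_0_l, Rplus_0_l, Gamma_1. ring.
  - rewrite S_INR. pose proof (pos_INR n).
    replace (INR n + 1 + 1 / 2) with (INR n + 1 / 2 + 1) by ring.
    rewrite !Gamma_succ, IHn by lra. simpl wallis_ratio. field. lra.
Qed.

Lemma Gamma_half_wallis_ratio_sqr_bounds k : (1 <= k)%nat ->
  1 / (INR k + 1 / 2) <= Gamma (1 / 2) ^ 2 * wallis_ratio k ^ 2 <= 1 / INR k.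
Proof.
  intros Hk. set (x := INR k).
  assert (Hx : 0 < x) by (apply lt_0_INR; lia).
  destruct (Gamma_add_half_ratio_sqr_bounds x Hx) as [Hlo Hup].
  replace (Gamma (x + 1 / 2) / Gamma x) with (Gamma (1 / 2) * wallis_ratio k * x) in Hlo, Hup.
  2:{ pose proof (Gamma_pos x Hx). unfold x in *.
      rewrite Gamma_nat_add_half, Gamma_succ by exact Hx. field. lra. }
  rewrite !Rpow_mult_distr in Hlo, Hup.
  assert (Hx2 : 0 < x ^ 2) by (apply pow_lt, Hx).
  split.
  - apply (Rmult_le_reg_r (x ^ 2) _ _ Hx2).
    replace (1 / (x + 1 / 2) * x ^ 2) with (x ^ 2 / (x + 1 / 2)) by (field; lra). exact Hlo.
  - apply (Rmult_le_reg_r (x ^ 2) _ _ Hx2).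
    replace (1 / x * x ^ 2) with x by (field; lra). exact Hup.
Qed.

Lemma Gamma_half_sqr_close k : (1 <= k)%nat ->
  Rabs (Gamma (1 / 2) ^ 2 - PI) <= PI / 2 / INR k.
Proof.
  intros Hk.
  destruct (Gamma_half_wallis_ratio_sqr_bounds k Hk) as [G1 G2].
  destruct (PI_wallis_ratio_sqr_bounds k Hk) as [P1 P2].
  assert (Hx : 0 < INR k) by (apply lt_0_INR; lia).
  pose proof (wallis_ratio_pos k) as Hw. pose proof PI_RGT_0 as HPI.
  set (w2 := wallis_ratio k ^ 2) in *.
  assert (Hw2 : 0 < w2) by (apply pow_lt; exact Hw).
  assert (Hgap : 1 / INR k - 1 / (INR k + 1 / 2) = PI / 2 / INR k * (1 / (PI * (INR k + 1 / 2))))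
    by (field; lra).
  assert (Hlow : 1 / (PI * (INR k + 1 / 2)) <= w2).
  { replace (1 / (PI * (INR k + 1 / 2))) with (1 / (INR k + 1 / 2) / PI) by (field; lra).
    apply (Rle_div_l _ _ _ HPI). lra. }
  assert (Hc : 0 <= PI / 2 / INR k) by (apply Rlt_le, Rdiv_lt_0_compat; lra).
  apply (Rmult_le_compat_l _ _ _ Hc) in Hlow.
  apply Rabs_le. split; apply (Rmult_le_reg_r w2); lra.
Qed.

Lemma Rabs_le_div_INR_eq_0 d c : 0 < c ->
  (forall k, (1 <= k)%nat -> Rabs d <= c / INR k) -> d = 0.
Proof.
  intros Hc Hd. destruct (Req_dec d 0) as [E|E]; [exact E|]. exfalso.
  pose proof (Rabs_pos_lt d E) as Hpos.
  destruct (archimed_cor1 (Rabs d / c)) as [N [HN HN0]]; [apply Rdiv_lt_0_compat; lra|].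
  specialize (Hd N HN0). apply (Rmult_lt_compat_l c) in HN; [|exact Hc].
  replace (c * (Rabs d / c)) with (Rabs d) in HN by (field; lra).
  unfold Rdiv in Hd. lra.
Qed.

Lemma Gamma_half : Gamma (1 / 2) = sqrt PI.
Proof.
  pose proof PI_RGT_0 as HPI.
  assert (Hsqr : Gamma (1 / 2) ^ 2 = PI).
  { apply Rminus_diag_uniq, (Rabs_le_div_INR_eq_0 _ (PI / 2)); [lra | exact Gamma_half_sqr_close]. }
  rewrite <- Hsqr, sqrt_pow2; [reflexivity|]. apply Rlt_le, Gamma_pos. lra.
Qed.

(** * The incomplete beta integral *)

(* In Stdlib [ln 0 = 0], hence [Rpower 0 a = 1]: the power function is extended
   by hand so as to be continuous at 0. *)
Definition Rpower0 (t a : R) : R := if Rlt_dec 0 t then Rpower t a else 0.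

Lemma Rpower0_pos t a : 0 < t -> Rpower0 t a = Rpower t a.
Proof. intros Ht. unfold Rpower0. destruct (Rlt_dec 0 t); [reflexivity | lra]. Qed.

Lemma Rpower0_nonpos t a : t <= 0 -> Rpower0 t a = 0.
Proof. intros Ht. unfold Rpower0. destruct (Rlt_dec 0 t); [lra | reflexivity]. Qed.

Lemma Rpower0_ge_0 t a : 0 <= Rpower0 t a.
Proof. unfold Rpower0. destruct (Rlt_dec 0 t); [apply Rlt_le, exp_pos | lra]. Qed.

Lemma Rpower0_small a (eps : posreal) : 0 < a ->
  exists d : posreal, forall t, Rabs t < d -> Rpower0 t a < eps.
Proof.
  intros Ha. exists (mkposreal _ (exp_pos (/ a * ln eps))). intros t Ht. simpl in Ht.
  destruct (Rle_dec t 0) as [Hneg|Hpos].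
  - rewrite Rpower0_nonpos by exact Hneg. apply cond_pos.
  - rewrite Rpower0_pos, Rabs_pos_eq in * by lra.
    replace (pos eps) with (Rpower (Rpower eps (/ a)) a)
      by (rewrite Rpower_mult, Rinv_l, Rpower_1; [reflexivity | apply cond_pos | lra]).
    apply Rlt_Rpower_l; [exact Ha | split; [lra | exact Ht]].
Qed.

Lemma Rpower0_continuous a t : 0 < a -> 0 <= t -> continuous (fun u => Rpower0 u a) t.
Proof.
  intros Ha Ht. destruct (Req_dec t 0) as [->|Hnz].
  - apply filterlim_locally. intros eps.
    destruct (Rpower0_small a eps Ha) as [d Hd]. exists d. intros u Hu.
    change (Rabs (Rpower0 u a - Rpower0 0 a) < eps).
    rewrite (Rpower0_nonpos 0) by lra. rewrite Rminus_0_r, Rabs_pos_eq by apply Rpower0_ge_0.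
    apply Hd. change (Rabs (u - 0) < d) in Hu. rewrite Rminus_0_r in Hu. exact Hu.
  - apply (continuous_ext_loc _ (fun u => Rpower u a)).
    + apply (locally_interval _ t 0 p_infty); simpl; try lra; auto.
      intros y Hy _. symmetry. apply Rpower0_pos, Hy.
    + apply (@ex_derive_continuous R_AbsRing R_NormedModule). unfold Rpower. auto_derive. lra.
Qed.

Lemma is_derive_Rpower0 a t : 0 < a -> 0 <= t ->
  is_derive (fun u => u * Rpower0 u a / (a + 1)) t (Rpower0 t a).
Proof.
  intros Ha Ht. destruct (Req_dec t 0) as [->|Hnz].
  - rewrite (Rpower0_nonpos 0) by lra. apply is_derive_Reals.
    intros eps Heps.
    assert (Heps' : 0 < eps * (a + 1)) by nra.
    destruct (Rpower0_small a (mkposreal _ Heps') Ha) as [d Hd].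
    exists d. intros h Hh0 Hh. simpl in Hd.
    rewrite Rplus_0_l, (Rpower0_nonpos 0) by lra.
    replace ((h * Rpower0 h a / (a + 1) - 0 * 0 / (a + 1)) / h - 0)
      with (Rpower0 h a / (a + 1)) by (field; lra).
    rewrite Rabs_pos_eq by (apply Rdiv_le_0_compat; [apply Rpower0_ge_0 | lra]).
    apply Rlt_div_l; [lra | apply Hd, Hh].
  - apply (is_derive_ext_loc (fun u => Rpower u (a + 1) / (a + 1))).
    + apply (locally_interval _ t 0 p_infty); simpl; try lra; auto.
      intros u Hu _. rewrite Rpower0_pos, Rpower_plus, Rpower_1 by exact Hu. field. lra.
    + rewrite Rpower0_pos by lra. unfold Rpower. auto_derive; [lra|].
      replace ((a + 1) * ln t) with (a * ln t + ln t) by ring.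
      rewrite exp_plus, exp_ln by lra. field. lra.
Qed.

Lemma is_RInt_Rpower0 a s : 0 < a -> 0 < s ->
  is_RInt (fun t => Rpower0 t a) 0 s (Rpower s (a + 1) / (a + 1)).
Proof.
  intros Ha Hs. set (F := fun u => u * Rpower0 u a / (a + 1)).
  replace (Rpower s (a + 1) / (a + 1)) with (minus (F s) (F 0)).
  - apply (@is_RInt_derive R_CompleteNormedModule); intros t Ht;
      rewrite Rmin_left, Rmax_right in Ht by lra.
    + apply is_derive_Rpower0; lra.
    + apply Rpower0_continuous; lra.
  - unfold minus, plus, opp, F. simpl.
    rewrite Rpower0_pos, Rpower_plus, Rpower_1 by exact Hs. field. lra.
Qed.

Lemma RInt_beta_half_bounds z s : 1 < z -> 0 < s < 1 ->
  Rpower s z / z <= RInt (fun t => Rpower t (z - 1) * Rpower (1 - t) (1 / 2 - 1)) 0 s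
                 <= / sqrt (1 - s) * (Rpower s z / z).
Proof.
  intros Hz Hs.
  set (f := fun t => Rpower0 t (z - 1)).
  assert (Hf : is_RInt f 0 s (Rpower s z / z)).
  { pose proof (is_RInt_Rpower0 (z - 1) s ltac:(lra) ltac:(lra)) as H.
    replace (z - 1 + 1) with z in H by ring. exact H. }
  set (g := fun t => f t * / sqrt (1 - t)).
  assert (Hg : ex_RInt g 0 s).
  { apply (@ex_RInt_continuous R_CompleteNormedModule). intros t Ht.
    rewrite Rmin_left, Rmax_right in Ht by lra.
    apply (continuous_mult (K := R_AbsRing) f (fun t => / sqrt (1 - t))).
    - apply Rpower0_continuous; lra.
    - apply (@ex_derive_continuous R_AbsRing R_NormedModule). auto_derive.
      pose proof (sqrt_lt_R0 (1 + - t) ltac:(lra)). repeat split; lra. }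
  rewrite (RInt_ext _ g).
  2:{ intros t Ht. rewrite Rmin_left, Rmax_right in Ht by lra. unfold g, f.
      rewrite Rpower0_pos by lra. replace (1 / 2 - 1) with (- / 2) by field.
      rewrite Rpower_Ropp, Rpower_sqrt by lra. reflexivity. }
  pose proof (sqrt_lt_R0 (1 - s) ltac:(lra)) as HR.
  split.
  - apply (is_RInt_le f g 0 s); [lra | exact Hf | apply (@RInt_correct R_CompleteNormedModule), Hg |].
    intros t Ht. unfold g. pose proof (Rpower0_ge_0 t (z - 1)).
    assert (1 <= / sqrt (1 - t)).
    { rewrite <- Rinv_1. apply Rinv_le_contravar; [apply sqrt_lt_R0; lra|].
      apply Rle_trans with (sqrt 1); [apply sqrt_le_1_alt; lra | rewrite sqrt_1; lra]. }
    fold (f t) in *. nra.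
  - apply (is_RInt_le g (fun t => / sqrt (1 - s) * f t) 0 s);
      [lra | apply (@RInt_correct R_CompleteNormedModule), Hg
      | apply (is_RInt_scal (V := R_NormedModule)), Hf |].
    intros t Ht. unfold g. pose proof (Rpower0_ge_0 t (z - 1)).
    assert (/ sqrt (1 - t) <= / sqrt (1 - s)).
    { apply Rinv_le_contravar; [exact HR | apply sqrt_le_1_alt; lra]. }
    fold (f t) in *. nra.
Qed.

Theorem mainTheorem14 (q z : R) :
  0 < q -> q < 1 / 2 -> 1 < z ->
  let p := 1 - q in
  let s := 4 * p * q in
  sqrt (z / (z + 1 / 2)) * (Rpower s z / sqrt (PI * z))
    <= inc_beta s z (1 / 2) /\
  inc_beta s z (1 / 2)
    <= 1 / sqrt (1 - s) * (Rpower s z / sqrt (PI * z)).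
Proof.
  intros Hq0 Hq1 Hz p s.
  assert (Hs : 0 < s < 1) by (unfold s, p; split; nra).
  destruct (RInt_beta_half_bounds z s Hz Hs) as [JL JU].
  destruct (Gamma_add_half_ratio_bounds z ltac:(lra)) as [GL GU].
  pose proof (Gamma_pos z ltac:(lra)) as HG. pose proof PI_RGT_0 as HPI.
  pose proof (sqrt_lt_R0 PI HPI) as HQ. pose proof (sqrt_lt_R0 (1 - s) ltac:(lra)) as HR.
  pose proof (sqrt_lt_R0 (z + 1 / 2) ltac:(lra)) as HY.
  pose proof (sqrt_sqrt z ltac:(lra)) as Hzz.
  assert (HzY : 0 < z / sqrt (z + 1 / 2)) by (apply Rdiv_lt_0_compat; lra).
  assert (HQ' : 0 <= / sqrt PI) by (apply Rlt_le, Rinv_0_lt_compat; lra).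
  unfold inc_beta. rewrite Gamma_half, sqrt_div, sqrt_mult by lra.
  set (P := Rpower s z) in *.
  assert (HP : 0 < P / z) by (apply Rdiv_lt_0_compat; [apply exp_pos | lra]).
  replace (Gamma (z + 1 / 2) / (Gamma z * sqrt PI))
    with (/ sqrt PI * (Gamma (z + 1 / 2) / Gamma z)) by (field; lra).
  split.
  - replace (sqrt z / sqrt (z + 1 / 2) * (P / (sqrt PI * sqrt z)))
      with (/ sqrt PI * (z / sqrt (z + 1 / 2)) * (P / z)) by (field; nra).
    apply Rmult_le_compat; [apply Rmult_le_pos | | apply Rmult_le_compat_l |]; lra.
  - replace (1 / sqrt (1 - s) * (P / (sqrt PI * sqrt z)))
      with (/ sqrt PI * sqrt z * (/ sqrt (1 - s) * (P / z)))
      by (set (r := sqrt z) in *; rewrite <- Hzz; field; nra).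
    apply Rmult_le_compat; [apply Rmult_le_pos | | apply Rmult_le_compat_l |]; lra.
Qed.
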